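(* Let $T$ be a tree with $n$ vertices. Then $\mathrm{Min4PC}_T$ is isometrically $\ell_1$-embeddable in $\mathbb{R}^{n-1}$; that is, there is a map $\phi:\mathcal{V}_2\to\mathbb{R}^{n-1}$ such that for all $\{i,j\},\{s,t\}\in\mathcal{V}_2$, $\mathrm{Min4PC}_T(\{i,j\},\{s,t\})=\lVert\phi(\{i,j\})-\phi(\{s,t\})\rVert_1$.
   Context: For a tree $T$ with vertex set $V$, $d_{i,j}$ denotes the distance between vertices $i,j$, and $\mathcal{V}_2$ is the set of 2-element subsets of $V$. The matrix $\mathrm{Min4PC}_T$ is the $\binom n2\times\binom n2$ matrix with rows and columns indexed by $\mathcal{V}_2$ whose entry in row $\{i,j\}$ and column $\{k,l\}$ is $\min\{d_{i,l}+d_{j,k},\ d_{i,k}+d_{j,l},\ d_{i,j}+d_{k,l}\}$. *)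

From HB Require Import structures.
From mathcomp Require Import all_boot all_order all_algebra.
From mathcomp Require Import reals.
Set Implicit Arguments. Unset Strict Implicit. Unset Printing Implicit Defensive.
Import Order.TTheory GRing.Theory Num.Theory.

Definition simple_graph (T : finType) (e : rel T) : Prop :=
  symmetric e /\ irreflexive e.

Definition graph_connected (T : finType) (e : rel T) : Prop :=
  forall x y : T, exists p : seq T, path e x p /\ last x p = y.

Definition graph_acyclic (T : finType) (e : rel T) : Prop :=
  forall (x : T) (p : seq T),
    uniq (x :: p) -> 2 <= size p -> path e x p -> ~~ e (last x p) x.

Definition is_tree (T : finType) (e : rel T) : Prop :=
  [/\ simple_graph e, graph_connected e & graph_acyclic e].

Fixpoint walk (T : finType) (e : rel T) (k : nat) (x y : T) : bool :=
  if k is k'.+1 then [exists z, e x z && walk e k' z y] else x == y.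

(* Graph distance: least k (< #|T|) such that a walk of length k from x to y
   exists (for a connected graph such a k always exists). *)
Definition dist (T : finType) (e : rel T) (x y : T) : nat :=
  find (fun k => walk e k x y) (iota 0 #|T|).

(* Entry of Min4PC in row {i,j}, column {k,l}. *)
Definition min4pc (T : finType) (e : rel T) (i j k l : T) : nat :=
  minn (dist e i l + dist e j k)
       (minn (dist e i k + dist e j l) (dist e i j + dist e k l)).

Definition l1norm (R : numDomainType) (m : nat) (v : 'rV[R]_m) : R :=
  \sum_(c < m) `|v 0 c|.

From HB Require Import structures.
From mathcomp Require Import all_boot all_order all_algebra.
From mathcomp Require Import reals.
From mathcomp Require Import zify.
Import Order.TTheory GRing.Theory Num.Theory.

Set Implicit Arguments. Unset Strict Implicit. Unset Printing Implicit Defensive.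

(* Root the tree at r.  The subtrees below the vertices form a laminar family,
   and d(x, y) is the number of subtrees containing exactly one of x and y (the
   subtree of r contains everything, so only the n - 1 others matter).  Writing
   s(c, x, y) for "subtree c separates x from y", each of the three sums in
   Min4PC(ij, st) equals the number of c with s(c,i,j) <> s(c,s,t), plus twice the
   number of c separating both pairs of that pairing; laminarity forbids all three
   pairings from having such a doubly separating subtree, so Min4PC(ij, st) is the
   l1 distance between the 0/1 vectors (s(c,i,j))_c and (s(c,s,t))_c. *)

Section CutDistance.
Variables (I T : finType) (X : I -> pred T).

Definition separates i x y := X i x != X i y.

Definition cut_dist x y := \sum_i (separates i x y : nat).

Lemma cut_dist_xx x : cut_dist x x = 0.
Proof. by apply: big1 => i _; rewrite /separates eqxx. Qed.

Lemma cut_dist_sym x y : cut_dist x y = cut_dist y x.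
Proof. by apply: eq_bigr => i _; rewrite /separates eq_sym. Qed.

Lemma cut_dist_triangle x y z : cut_dist x y <= cut_dist x z + cut_dist z y.
Proof.
rewrite -big_split; apply: leq_sum => i _; rewrite /separates.
by case: (X i x); case: (X i y); case: (X i z).
Qed.

Lemma cut_dist_pairing a b c d :
  cut_dist a b + cut_dist c d =
  \sum_i (separates i a b != separates i c d : nat) +
  2 * \sum_i (separates i a b && separates i c d : nat).
Proof.
rewrite big_distrr -!big_split; apply: eq_bigr => i _.
by case: (separates i a b); case: (separates i c d).
Qed.

Definition laminar := forall i j,
  [\/ forall x, X i x -> X j x, forall x, X j x -> X i x | forall x, X i x -> ~~ X j x].

Hypothesis X_laminar : laminar.

Lemma laminar_at (q : seq T) i j :
  [|| all (fun x => X i x ==> X j x) q, all (fun x => X j x ==> X i x) q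
    | all (fun x => ~~ (X i x && X j x)) q].
Proof.
case: (X_laminar i j) => H; apply/or3P;
  [apply: Or31 | apply: Or32 | apply: Or33]; apply/allP => x _.
- by apply/implyP/H.
- by apply/implyP/H.
- by apply/nandP; case: (boolP (X i x)) => [/H|]; [right | left].
Qed.

(* Each of the three cuts would induce a 2|2 split of the quartet, two of these
   splits would differ, and two different 2|2 splits cannot be laminar. *)
Lemma laminar_no_triple_crossing a b c d i1 i2 i3 :
  separates i1 a d && separates i1 b c -> separates i2 a c && separates i2 b d ->
  separates i3 a b && separates i3 c d -> False.
Proof.
move: (laminar_at [:: a; b; c; d] i1 i2) (laminar_at [:: a; b; c; d] i2 i3).
move: (laminar_at [:: a; b; c; d] i1 i3); rewrite /separates /=.
by case: (X i1 a); case: (X i1 d) => //; case: (X i1 b); case: (X i1 c) => //;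
   case: (X i2 a); case: (X i2 c) => //; case: (X i2 b); case: (X i2 d) => //;
   case: (X i3 a); case: (X i3 b) => //; case: (X i3 c); case: (X i3 d).
Qed.

Lemma laminar_min_pairing a b c d :
  minn (cut_dist a d + cut_dist b c)
       (minn (cut_dist a c + cut_dist b d) (cut_dist a b + cut_dist c d)) =
  \sum_i (separates i a b != separates i c d : nat).
Proof.
rewrite !cut_dist_pairing.
have -> : \sum_i (separates i a d != separates i b c : nat) =
          \sum_i (separates i a b != separates i c d : nat).
  by apply: eq_bigr => i _; rewrite /separates;
     case: (X i a); case: (X i b); case: (X i c); case: (X i d).
have -> : \sum_i (separates i a c != separates i b d : nat) =
          \sum_i (separates i a b != separates i c d : nat).
  by apply: eq_bigr => i _; rewrite /separates;
     case: (X i a); case: (X i b); case: (X i c); case: (X i d).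
set S := \sum_i _.
set N1 := \sum_i _; set N2 := \sum_i _; set N3 := \sum_i _.
suff : [|| N1 == 0, N2 == 0 | N3 == 0] by case/or3P => /eqP; lia.
rewrite !sum_nat_eq0; apply: contraT.
move=> /norP[/forallPn[i1 +] /norP[/forallPn[i2 +] /forallPn[i3 +]]].
rewrite !eqb0 !negbK => H1 H2 H3.
case: (laminar_no_triple_crossing H1 H2 H3).
Qed.

End CutDistance.

Section Walks.
Variables (T : finType) (e : rel T).
Hypothesis e_sym : symmetric e.

Lemma walk_cons k x z y : e x z -> walk e k z y -> walk e k.+1 x y.
Proof. by move=> exz wzy; apply/existsP; exists z; rewrite exz. Qed.

Lemma walk_rcons k x y z : walk e k x y -> e y z -> walk e k.+1 x z.
Proof.
elim: k x => [|k IH] x; first by move=> /eqP-> eyz; apply: (walk_cons eyz); exact: eqxx.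
by case/existsP=> w /andP[exw wwy] eyz; apply: walk_cons exw (IH _ wwy eyz).
Qed.

Lemma walk_sym k x y : walk e k x y -> walk e k y x.
Proof.
elim: k x => [|k IH] x /=; first by rewrite eq_sym.
by case/existsP=> w /andP[exw wwy]; apply: walk_rcons (IH _ wwy) _; rewrite e_sym.
Qed.

Lemma path_walk x p : path e x p -> walk e (size p) x (last x p).
Proof. by elim: p x => //= z p IH x /andP[exz pz]; apply: walk_cons exz (IH _ pz). Qed.

Lemma dist_le_walk k x y : walk e k x y -> dist e x y <= k.
Proof.
move=> wk; rewrite /dist; have [ltkT | leTk] := ltnP k #|T|.
  by rewrite leqNgt; apply/negP => /(before_find 0); rewrite nth_iota // add0n wk.
by apply: leq_trans (find_size _ _) _; rewrite size_iota.
Qed.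

Hypothesis e_connected : graph_connected e.

Lemma walk_dist x y : walk e (dist e x y) x y.
Proof.
have [p [px <-]] := e_connected x y.
case: (shortenP px) => q qx uq _.
have short_q : size (x :: q) <= #|T| by rewrite -(card_uniqP uq) max_card.
have has_walk : has (fun k => walk e k x (last x q)) (iota 0 #|T|).
  by apply/hasP; exists (size q); [rewrite mem_iota | apply: path_walk].
have := nth_find 0 has_walk; rewrite nth_iota ?add0n //.
by rewrite has_find size_iota in has_walk.
Qed.

End Walks.

Lemma belast_traject (S : eqType) (f : S -> S) x n :
  belast x (traject f (f x) n) = traject f x n.
Proof. by elim: n x => //= n IH x; rewrite IH. Qed.

Section RootedTree.
Variables (T : finType) (e : rel T).
Hypotheses (e_sym : symmetric e) (e_irr : irreflexive e).
Hypotheses (e_connected : graph_connected e) (e_acyclic : graph_acyclic e).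
Variable r : T.

Definition depth v := dist e v r.

Definition parent v := odflt v [pick z | e v z & depth z < depth v].

Definition subtree v : pred T := fun x => fconnect parent x v.

Lemma depth_eq0 v : (depth v == 0) = (v == r).
Proof.
apply/idP/eqP => [/eqP dv0 | ->].
  by have := walk_dist e_connected v r; rewrite -/(depth v) dv0 => /eqP.
by rewrite -leqn0; apply: (@dist_le_walk _ _ 0); exact: eqxx.
Qed.

Lemma depth_root : depth r = 0.
Proof. by apply/eqP; rewrite depth_eq0. Qed.

Lemma depth_le_edge u v : e u v -> depth u <= (depth v).+1.
Proof. by move=> euv; apply: dist_le_walk; apply: walk_cons euv (walk_dist e_connected v r). Qed.

Lemma parent_spec v : v != r -> e v (parent v) /\ depth (parent v) = (depth v).-1.
Proof.
rewrite -depth_eq0 /parent; case: pickP => [z /andP[evz lt_zv] | no_z] vr /=.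
  by split=> //; have := depth_le_edge evz; lia.
have := walk_dist e_connected v r; rewrite -/(depth v).
case: (depth v) vr no_z => [|k] //= _ no_z /existsP[z /andP[evz wzr]].
by have := no_z z; rewrite evz ltnS (dist_le_walk wzr).
Qed.

Lemma parent_root : parent r = r.
Proof. by rewrite /parent; case: pickP => [z /andP[_]|] //=; rewrite depth_root. Qed.

Lemma depth_parent v : depth (parent v) = (depth v).-1.
Proof.
have [-> | /parent_spec[] //] := eqVneq v r.
by rewrite parent_root depth_root.
Qed.

Lemma depth_iter k x : depth (iter k parent x) = depth x - k.
Proof. by elim: k => [|k IH]; rewrite ?subn0 //= depth_parent IH subnS. Qed.

Lemma iter_depth x : iter (depth x) parent x = r.
Proof. by apply/eqP; rewrite -depth_eq0 depth_iter subnn. Qed.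

Lemma subtreeP v x : reflect (exists k, iter k parent x = v) (subtree v x).
Proof.
apply: (iffP idP) => [/iter_findex <- | [k <-]]; last exact: fconnect_iter.
by exists (findex parent x v).
Qed.

Lemma subtree_refl x : subtree x x.
Proof. exact: connect0. Qed.

Lemma subtree_root x : subtree r x.
Proof. by apply/subtreeP; exists (depth x); rewrite iter_depth. Qed.

Lemma subtree_trans u v x : subtree u v -> subtree v x -> subtree u x.
Proof. by move=> uv vx; apply: connect_trans vx uv. Qed.

Lemma subtree_depth v x :
  subtree v x -> depth v <= depth x /\ iter (depth x - depth v) parent x = v.
Proof.
move=> /subtreeP[k <-]; rewrite depth_iter; split; first exact: leq_subr.
have [le_kx | lt_xk] := leqP k (depth x); first by rewrite subKn.
have -> : depth x - k = 0 by lia.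
by rewrite subn0 iter_depth -(subnK (ltnW lt_xk)) iterD iter_depth iter_fix // parent_root.
Qed.

Lemma subtree_antisym x y : subtree x y -> subtree y x -> x = y.
Proof.
move=> /subtree_depth[le_xy xy] /subtree_depth[le_yx _].
by rewrite -xy (_ : depth y - depth x = 0) //; lia.
Qed.

Lemma subtree_total v w x : subtree v x -> subtree w x -> subtree v w \/ subtree w v.
Proof.
move=> /subtreeP[k <-] /subtreeP[m <-]; have [le_km | /ltnW le_mk] := leqP k m.
  by right; apply/subtreeP; exists (m - k); rewrite -iterD subnK.
by left; apply/subtreeP; exists (k - m); rewrite -iterD subnK.
Qed.

Lemma subtree_laminar : laminar subtree.
Proof.
move=> v w; case: (pickP (fun x => subtree v x && subtree w x)) => [x /andP[vx wx] | none].
  by case: (subtree_total vx wx) => [vw | wv]; [apply: Or32 | apply: Or31] => y;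
     apply: subtree_trans.
by apply: Or33 => x vx; apply/negP => wx; have := none x; rewrite vx wx.
Qed.

Lemma subtree_parent u x : u != x -> subtree u (parent x) = subtree u x.
Proof.
move=> ne_ux; apply/idP/idP => [ux | /subtreeP[[|k] ux]].
- exact: subtree_trans ux (fconnect1 parent x).
- by rewrite -ux eqxx in ne_ux.
- by apply/subtreeP; exists k; rewrite -iterSr.
Qed.

Lemma parent_notin_subtree x : x != r -> ~~ subtree x (parent x).
Proof.
rewrite -depth_eq0 => dx; apply/negP => /subtree_depth[+ _].
by rewrite depth_parent; lia.
Qed.

Lemma path_traject_parent x k : k <= depth x -> path e x (traject parent (parent x) k).
Proof.
elim: k x => [|k IH] x // le_kx /=.
have xr : x != r by rewrite -depth_eq0; lia.
by rewrite (parent_spec xr).1 IH // depth_parent; lia.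
Qed.

Lemma uniq_traject_parent x k : k <= (depth x).+1 -> uniq (traject parent x k).
Proof.
elim: k x => [|k IH] x // le_kx /=; rewrite IH ?depth_parent; last by lia.
rewrite andbT; apply/trajectP => -[j lt_jk E].
by have := congr1 depth E; rewrite depth_iter depth_parent; lia.
Qed.

(* Going up from [a] to the first common ancestor and back down to [b] gives
   a cycle, which the edge [b a] would close. *)
Lemma branches_not_adjacent a b k m :
  0 < k -> 0 < m -> k <= depth a -> m <= depth b ->
  iter k parent a = iter m parent b ->
  (forall l, l < k -> ~~ subtree (iter l parent a) b) -> ~~ e b a.
Proof.
move=> k_gt0 m_gt0 le_ka le_mb meet below.
pose p := traject parent (parent a) k ++ rev (traject parent b m).
have p_path : path e a p.
  have down_b : path (fun z => e^~ z) b (traject parent (parent b) m).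
    by apply: sub_path (path_traject_parent le_mb) => y z; rewrite e_sym.
  rewrite -rev_path belast_traject last_traject in down_b.
  by rewrite cat_path path_traject_parent // last_traject meet down_b.
have p_last : last a p = b.
  by rewrite last_cat -(prednK m_gt0) /= rev_cons last_rcons.
have p_uniq : uniq (a :: p).
  change (uniq (traject parent a k.+1 ++ rev (traject parent b m))).
  rewrite cat_uniq rev_uniq !uniq_traject_parent ?ltnS ?(leqW le_mb) // andbT.
  rewrite has_rev; apply/hasPn => y /trajectP[j lt_jm ->].
  apply/negP => /trajectP[l le_lk E].
  have [lt_lk | ge_lk] := ltnP l k.
    by have := below l lt_lk; rewrite -E /subtree fconnect_iter.
  by have := congr1 depth E; have := congr1 depth meet; rewrite !depth_iter; lia.
have p_size : 1 < size p by rewrite size_cat size_rev !size_traject; lia.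
by have := e_acyclic p_uniq p_size p_path; rewrite p_last.
Qed.

Lemma edge_parent a b : e a b -> a = parent b \/ b = parent a.
Proof.
wlog le_ab : a b / depth a <= depth b.
  move=> W eab; have [|/ltnW le_ba] := leqP (depth a) (depth b); first by move/W; apply.
  by case: (W b a le_ba); rewrite 1?e_sym //; [right | left].
move=> eab; have [-> | ne_a] := eqVneq a (parent b); first by left.
have [-> | ne_b] := eqVneq b (parent a); first by right.
have root_above : exists k, subtree (iter k parent a) b.
  by exists (depth a); rewrite iter_depth subtree_root.
have [k below_k min_k] := ex_minnP root_above.
have le_ka : k <= depth a by apply: min_k; rewrite iter_depth subtree_root.
have [le_cb meet] := subtree_depth below_k; rewrite depth_iter in le_cb meet.
have le_ba : depth b <= (depth a).+1 by apply: depth_le_edge; rewrite e_sym.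
have k_gt0 : 0 < k.
  rewrite lt0n; apply/eqP => k0; move: meet; rewrite k0 subn0 /=.
  have [-> | ->] : depth b - depth a = 0 \/ depth b - depth a = 1 by lia.
    by move=> /= ba; rewrite ba e_irr in eab.
  by move=> /= ba; rewrite ba eqxx in ne_a.
have below : forall l, l < k -> ~~ subtree (iter l parent a) b.
  by move=> l lt_lk; apply/negP => /min_k; lia.
have m_gt0 : 0 < depth b - (depth a - k) by lia.
have := branches_not_adjacent k_gt0 m_gt0 le_ka (leq_subr _ _) (esym meet) below.
by rewrite e_sym eab.
Qed.

Lemma cut_dist_parent x : cut_dist subtree x (parent x) <= 1.
Proof.
have [-> | xr] := eqVneq x r; first by rewrite parent_root cut_dist_xx.
rewrite /cut_dist (bigD1 x) //= big1 ?addn0 ?leq_b1 // => v ne_vx.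
by rewrite /separates subtree_parent // eqxx.
Qed.

Lemma cut_dist_edge a b : e a b -> cut_dist subtree a b <= 1.
Proof. by case/edge_parent => ->; rewrite ?cut_dist_parent // cut_dist_sym cut_dist_parent. Qed.

Lemma cut_dist_le_walk k x y : walk e k x y -> cut_dist subtree x y <= k.
Proof.
elim: k x => [|k IH] x; first by move/eqP->; rewrite cut_dist_xx.
case/existsP => z /andP[exz wzy].
apply: leq_trans (cut_dist_triangle subtree x y z) _.
by rewrite -add1n leq_add ?cut_dist_edge ?IH.
Qed.

Lemma cut_dist_step x y :
  x != r -> ~~ subtree x y -> cut_dist subtree x y = (cut_dist subtree (parent x) y).+1.
Proof.
move=> xr nxy; rewrite /cut_dist (bigD1 x) //= [in RHS](bigD1 x) //=.
rewrite /separates subtree_refl (negbTE nxy) (negbTE (parent_notin_subtree xr)) /=.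
by rewrite add0n add1n; congr _.+1; apply: eq_bigr => v ne_vx; rewrite subtree_parent.
Qed.

Lemma walk_cut_dist x y : walk e (cut_dist subtree x y) x y.
Proof.
have [n] := ubnP (cut_dist subtree x y); elim: n x y => // n IH x y.
wlog nxy : x y / ~~ subtree x y.
  move=> W lt_n; have [yx | nyx] := boolP (subtree y x); last first.
    by rewrite cut_dist_sym in lt_n *; apply: (walk_sym e_sym); apply: W.
  have [xy | nxy] := boolP (subtree x y); last exact: W nxy lt_n.
  by rewrite (subtree_antisym xy yx) cut_dist_xx; exact: eqxx.
have xr : x != r by apply: contraNneq nxy => ->; apply: subtree_root.
rewrite cut_dist_step // ltnS => lt_n.
exact: walk_cons (parent_spec xr).1 (IH _ _ lt_n).
Qed.

Lemma dist_cut_dist x y : dist e x y = cut_dist subtree x y.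
Proof.
apply/eqP; rewrite eqn_leq dist_le_walk ?walk_cut_dist //=.
exact: cut_dist_le_walk (walk_dist e_connected x y).
Qed.

Lemma min4pc_subtree i j s t :
  min4pc e i j s t =
  \sum_v (separates subtree v i j != separates subtree v s t : nat).
Proof. by rewrite /min4pc !dist_cut_dist (laminar_min_pairing subtree_laminar). Qed.

End RootedTree.

Local Open Scope ring_scope.

Definition splits (T : finType) (A : pred T) (S : {set T}) :=
  [exists x in S, exists y in S, A x != A y].

Lemma splits_pair (T : finType) (A : pred T) i j : splits A [set i; j] = (A i != A j).
Proof.
apply/existsP/idP => [[x /andP[]] | ij]; last first.
  by exists i; rewrite !inE eqxx /=; apply/existsP; exists j; rewrite !inE eqxx orbT.
rewrite !inE => /orP[]/eqP-> /existsP[y /andP[]];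
  by rewrite !inE => /orP[]/eqP->; rewrite ?eqxx // eq_sym.
Qed.

Lemma normr_sub_nat_bool (R : numDomainType) (a b : bool) :
  `|(a : nat)%:R - (b : nat)%:R| = (a != b : nat)%:R :> R.
Proof. by case: a; case: b; rewrite /= ?subrr ?subr0 ?sub0r ?normrN ?normr1 ?normr0. Qed.

Theorem theorem1p4 (R : realType) (T : finType) (e : rel T) :
  is_tree e ->
  exists phi : {set T} -> 'rV[R]_(#|T|.-1),
    forall i j s t : T, i != j -> s != t ->
      (min4pc e i j s t)%:R = l1norm (phi [set i; j] - phi [set s; t]).
Proof.
case=> -[e_sym e_irr] e_connected e_acyclic.
have [r _ | T0] := pickP (@predT T); last by exists (fun=> 0) => i; have := T0 i.
rewrite -(cardC1 r).
exists (fun S => \row_(c < #|predC1 r|) (splits (subtree e r (enum_val c)) S : nat)%:R).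
move=> i j s t _ _; rewrite (min4pc_subtree e_sym e_irr e_connected e_acyclic r).
rewrite (bigD1 r) //= /separates !(subtree_root e_connected) add0n natr_sum /l1norm.
rewrite [LHS](eq_bigl [in predC1 r]) => [|v]; last by rewrite inE.
rewrite big_enum_val.
by apply: eq_bigr => c _; rewrite !mxE !splits_pair normr_sub_nat_bool.
Qed.
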